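(* Let $\vec G_0$ be a directed graph with Eulerian Laplacian $\mathbf{L}_{\vec G_0}$, let $\beta>0$, and let $\vec G_1 = \mathcal{U}^{(\beta)}(\vec G_0)$ be its $\beta$-partial-symmetrization. Then $\mathbf{L}_{\vec G_1}^+$ is a $\big(1-\frac{1}{1+\beta}\big)$-approximate pseudoinverse of $\mathbf{L}_{\vec G_0}$ with respect to $\mathbf{U}_{\mathbf{L}_{\vec G_1}}$.
   Context: For a weighted directed graph $\vec G$ with adjacency matrix $\mathbf{A}_{\vec G}(i,j)=\omega((i,j))$ and diagonal out-degree matrix $\mathbf{D}_{\vec G}$, $\mathbf{L}_{\vec G}=\mathbf{D}_{\vec G}-\mathbf{A}_{\vec G}^T$; it is Eulerian if $\mathbf{L}_{\vec G}\mathbf{1}=\mathbf{0}$. The undirectification $\mathcal{U}(\vec G)$ is the undirected graph with edge $\{u,v\}$ of weight $\frac12(\omega(u,v)+\omega(v,u))$ (with $\omega=0$ for non-edges), viewed as a directed graph with both orientations. The $\beta$-partial-symmetrization is $\mathcal{U}^{(\beta)}(\vec G)=\beta\cdot\mathcal{U}(\vec G)+\vec G$, so $\mathbf{L}_{\mathcal{U}^{(\beta)}(\vec G)}=\beta\mathbf{U}_{\mathbf{L}_{\vec G}}+\mathbf{L}_{\vec G}$, where $\mathbf{U}_{\mathbf{M}}=\frac12(\mathbf{M}+\mathbf{M}^T)$. For PSD $\mathbf{H}$, $\|\mathbf{M}\|_{\mathbf{H}\to\mathbf{H}}=\max_{\mathbf{x}\neq0}\|\mathbf{M}\mathbf{x}\|_{\mathbf{H}}/\|\mathbf{x}\|_{\mathbf{H}}$,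 $\|\mathbf{x}\|_{\mathbf{H}}=\sqrt{\mathbf{x}^T\mathbf{H}\mathbf{x}}$. $\mathbf{Z}$ is an $\epsilon$-approximate pseudoinverse of $\mathbf{M}$ with respect to PSD $\mathbf{U}$ if $\ker(\mathbf{U})\subseteq\ker(\mathbf{M})=\ker(\mathbf{M}^T)=\ker(\mathbf{Z})=\ker(\mathbf{Z}^T)$ and $\|\mathbf{I}_{\operatorname{im}(\mathbf{M})}-\mathbf{Z}\mathbf{M}\|_{\mathbf{U}\to\mathbf{U}}\le\epsilon$. *)

From HB Require Import structures.
From mathcomp Require Import all_boot all_order all_algebra.
Set Implicit Arguments. Unset Strict Implicit. Unset Printing Implicit Defensive.
Import Order.TTheory GRing.Theory Num.Theory.
Local Open Scope ring_scope.

Section Defs.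
Variables (R : rcfType) (n : nat).

(* A weighted directed graph on vertex set 'I_n is given by its weight
   function w : 'M_n, with w i j = omega((i,j)) >= 0 (0 for non-edges).
   Its adjacency matrix is A(i,j) = w i j. *)
Definition adjacency (w : 'M[R]_n) : 'M[R]_n := w.

Definition outdeg (w : 'M[R]_n) : 'M[R]_n :=
  \matrix_(i, j) (if i == j then \sum_(k < n) w i k else 0).

Definition dlap (w : 'M[R]_n) : 'M[R]_n := outdeg w - (adjacency w)^T.

Definition eulerian (w : 'M[R]_n) : Prop :=
  dlap w *m (const_mx 1 : 'cV[R]_n) = 0.

Definition undirectify (w : 'M[R]_n) : 'M[R]_n :=
  \matrix_(i, j) ((w i j + w j i) / 2%:R).

Definition partial_symm (beta : R) (w : 'M[R]_n) : 'M[R]_n :=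
  beta *: undirectify w + w.

Definition symm_part (M : 'M[R]_n) : 'M[R]_n := 2%:R^-1 *: (M + M^T).

Definition hnorm (H : 'M[R]_n) (x : 'cV[R]_n) : R :=
  Num.sqrt ((x^T *m H *m x) ord0 ord0).

(* ||M||_{H->H} <= eps, i.e. max_{x<>0} ||Mx||_H/||x||_H <= eps, unfolded as
   ||Mx||_H <= eps ||x||_H for all x. *)
Definition opnorm_le (H M : 'M[R]_n) (eps : R) : Prop :=
  forall x : 'cV[R]_n, hnorm H (M *m x) <= eps * hnorm H x.

(* P is the orthogonal projection I_{im(M)} onto the column space of M *)
Definition is_orth_proj_im (P M : 'M[R]_n) : Prop :=
  P^T = P /\ P *m P = P /\ (P^T == M^T)%MS.

Definition in_ker (M : 'M[R]_n) (x : 'cV[R]_n) : Prop := M *m x = 0.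

Definition approx_pinv (eps : R) (Z M U : 'M[R]_n) : Prop :=
  (forall x, in_ker U x -> in_ker M x) /\
  (forall x, in_ker M x <-> in_ker M^T x) /\
  (forall x, in_ker M x <-> in_ker Z x) /\
  (forall x, in_ker M x <-> in_ker Z^T x) /\
  (forall P, is_orth_proj_im P M -> opnorm_le U (P - Z *m M) eps).

Definition is_mp_pinv (Z M : 'M[R]_n) : Prop :=
  M *m Z *m M = M /\ Z *m M *m Z = Z /\
  (M *m Z)^T = M *m Z /\ (Z *m M)^T = Z *m M.

End Defs.

From HB Require Import structures.
From mathcomp Require Import all_boot all_order all_algebra ring lra.
Set Implicit Arguments. Unset Strict Implicit. Unset Printing Implicit Defensive.
Import Order.TTheory GRing.Theory Num.Theory.
Local Open Scope ring_scope.

(* Write L0 := dlap w0, S0 := symm_part L0 and L1 := dlap (partial_symm beta w0).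
   As w0 is Eulerian, L1 = beta S0 + L0, the partially symmetrized graph is again
   Eulerian, and U := symm_part L1 = (1 + beta) S0.  For an Eulerian Laplacian,
   2 x^T L x = sum_ij w_ij (x_i - x_j)^2, so L, L^T and symm_part L have the same
   kernel; hence L0, L1, L1^T and U all share one kernel, and the orthogonal
   projection onto im L0 is L1^+ L1.  Then
   I - L1^+ L0 = L1^+ (L1 - L0) = beta / (1 + beta) * L1^+ U, and L1^+ U is a
   U-contraction: v := L1^+ U x satisfies L1 v = U x, so |v|_U^2 = v^T U x and
   0 <= |v - x|_U^2 = |x|_U^2 - |v|_U^2. *)

Section KernelFactorization.
Variables (R : comPzRingType) (n : nat).
Implicit Types (P Q : 'M[R]_n) (x : 'cV[R]_n).

Lemma mulmx_cV_inj P Q : (forall x, P *m x = Q *m x) -> P = Q.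
Proof.
move=> eqPQ; apply/matrixP => i j.
have := congr1 (fun v : 'cV[R]_n => v i 0) (eqPQ (delta_mx j 0)).
by rewrite -!colE !mxE.
Qed.

Lemma mulmx_idem_ker P Q : Q *m Q = Q ->
  (forall x, Q *m x = 0 -> P *m x = 0) -> P *m Q = P.
Proof.
move=> QQ kerQP; apply: mulmx_cV_inj => x.
have /kerQP : Q *m (x - Q *m x) = 0 by rewrite mulmxBr mulmxA QQ subrr.
by rewrite mulmxBr mulmxA => /subr0_eq.
Qed.

Lemma orth_proj_eq P Q :
  P^T = P -> P *m P = P -> Q^T = Q -> Q *m Q = Q ->
  (forall x, P *m x = 0 <-> Q *m x = 0) -> P = Q.
Proof.
move=> PT PP QT QQ kerPQ.
have PQP : P *m Q = P by apply: mulmx_idem_ker => // x /kerPQ.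
have QPQ : Q *m P = Q by apply: mulmx_idem_ker => // x /kerPQ.
by rewrite -PT -PQP trmx_mul PT QT QPQ.
Qed.

End KernelFactorization.

Section QuadraticForm.
Variables (R : comPzRingType) (n : nat).
Implicit Types (M N : 'M[R]_n) (x y : 'cV[R]_n).

Definition qform M x : R := (x^T *m M *m x) 0 0.

Lemma qform_tr M x : qform M^T x = qform M x.
Proof.
rewrite /qform; have -> : x^T *m M^T *m x = (x^T *m M *m x)^T.
  by rewrite !trmx_mul trmxK mulmxA.
by rewrite mxE.
Qed.

Lemma qformD M N x : qform (M + N) x = qform M x + qform N x.
Proof. by rewrite /qform mulmxDr mulmxDl mxE. Qed.

Lemma qformZ a M x : qform (a *: M) x = a * qform M x.
Proof. by rewrite /qform -scalemxAr -scalemxAl mxE. Qed.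

Lemma qformZv a M x : qform M (a *: x) = a ^+ 2 * qform M x.
Proof.
by rewrite /qform linearZ /= linearZ /= -!scalemxAl !mxE mulrA expr2.
Qed.

Lemma qformE M x : qform M x = \sum_i x i 0 * (M *m x) i 0.
Proof. by rewrite /qform -mulmxA mxE; apply: eq_bigr => i _; rewrite mxE. Qed.

Lemma qform_ker M x : M *m x = 0 -> qform M x = 0.
Proof. by move=> Mx0; rewrite /qform -mulmxA Mx0 mulmx0 mxE. Qed.

Lemma qformB M x y : M^T = M ->
  qform M (x - y) = qform M x - 2 * (x^T *m M *m y) 0 0 + qform M y.
Proof.
move=> MT.
have yMx : y^T *m M *m x = (x^T *m M *m y)^T.
  by rewrite !trmx_mul trmxK MT mulmxA.
rewrite /qform linearB /= linearB /= !mulmxBl yMx !mxE.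
ring.
Qed.

End QuadraticForm.

Section PseudoInverse.
Variables (R : rcfType) (n : nat).
Implicit Types (M P : 'M[R]_n) (x y : 'cV[R]_n).

Lemma symm_partT M : (symm_part M)^T = symm_part M.
Proof. by rewrite /symm_part linearZ /= linearD /= trmxK addrC. Qed.

Lemma qform_symm_part M x : qform (symm_part M) x = qform M x.
Proof. by rewrite /symm_part qformZ qformD qform_tr; field. Qed.

Lemma hnormZ M a x : hnorm M (a *: x) = `|a| * hnorm M x.
Proof. by rewrite /hnorm -/(qform _ _) qformZv sqrtrM ?sqr_ge0 // sqrtr_sqr. Qed.

Lemma orth_proj_im_ker P M x :
  is_orth_proj_im P M -> P *m x = 0 <-> M^T *m x = 0.
Proof.
case=> PT [_ /andP[/submxP[D PTE] /submxP[D' MTE]]].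
split=> [Px0 | MTx0]; first by rewrite MTE -mulmxA PT Px0 mulmx0.
by rewrite -PT PTE -mulmxA MTx0 mulmx0.
Qed.

Section MoorePenrose.
Variables M Z : 'M[R]_n.
Hypothesis pinvZ : is_mp_pinv Z M.

Lemma mp_pinv_ker x : Z *m x = 0 <-> M^T *m x = 0.
Proof.
case: pinvZ => MZM [ZMZ [MZT _]]; split=> [Zx0 | MTx0].
  by rewrite -MZM trmx_mul MZT -!mulmxA Zx0 !mulmx0.
by rewrite -ZMZ -[Z *m M *m Z]mulmxA -MZT trmx_mul -!mulmxA MTx0 !mulmx0.
Qed.

Lemma mp_pinv_trmx_ker x : Z^T *m x = 0 <-> M *m x = 0.
Proof.
case: pinvZ => MZM [ZMZ [_ ZMT]]; split=> [ZTx0 | Mx0].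
  by rewrite -MZM -[M *m Z *m M]mulmxA -ZMT trmx_mul -!mulmxA ZTx0 !mulmx0.
by rewrite -ZMZ trmx_mul ZMT -!mulmxA Mx0 !mulmx0.
Qed.

Lemma mp_pinv_proj_ker x : Z *m M *m x = 0 <-> M *m x = 0.
Proof.
case: pinvZ => MZM _; split=> [ZMx0 | Mx0]; last by rewrite -mulmxA Mx0 mulmx0.
by rewrite -MZM -[M *m Z *m M]mulmxA -mulmxA ZMx0 mulmx0.
Qed.

Lemma mp_pinv_proj_idem : Z *m M *m (Z *m M) = Z *m M.
Proof. by case: pinvZ => _ [ZMZ _]; rewrite mulmxA ZMZ. Qed.

Lemma mp_pinv_range U : U^T = U -> (forall x, M^T *m x = 0 -> U *m x = 0) ->
  M *m Z *m U = U.
Proof.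
case: pinvZ => MZM [ZMZ [MZT _]] UT kerMTU.
have UMZ : U *m (M *m Z) = U.
  apply: mulmx_idem_ker => [|x MZx0]; first by rewrite mulmxA MZM.
  apply/kerMTU/mp_pinv_ker.
  by rewrite -ZMZ -[Z *m M *m Z]mulmxA -mulmxA MZx0 mulmx0.
by rewrite -UT -MZT -trmx_mul UMZ.
Qed.

Lemma hnorm_pinv_symm_part_le x :
  (forall y, 0 <= qform (symm_part M) y) ->
  (forall y, M^T *m y = 0 -> symm_part M *m y = 0) ->
  hnorm (symm_part M) (Z *m symm_part M *m x) <= hnorm (symm_part M) x.
Proof.
set U := symm_part M => U_psd kerMTU; set v := Z *m U *m x.
have Mv : M *m v = U *m x by rewrite /v !mulmxA mp_pinv_range // symm_partT.
have qUv : qform U v = (v^T *m U *m x) 0 0.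
  by rewrite qform_symm_part /qform -mulmxA Mv mulmxA.
apply: ler_wsqrtr; change (qform U v <= qform U x).
have := U_psd (v - x); rewrite qformB ?symm_partT // -qUv.
lra.
Qed.

End MoorePenrose.

End PseudoInverse.

Section Laplacian.
Variables (R : rcfType) (n : nat) (w : 'M[R]_n).
Implicit Types (x : 'cV[R]_n).

Lemma outdegE : outdeg w = diag_mx (\row_i \sum_k w i k).
Proof. by apply/matrixP => i j; rewrite !mxE; case: eqP. Qed.

Lemma dlap_mulmxE x i :
  (dlap w *m x) i 0 = (\sum_k w i k) * x i 0 - \sum_j w j i * x j 0.
Proof.
rewrite /dlap /adjacency mulmxBl outdegE mul_diag_mx !mxE.
by congr (_ - _); apply: eq_bigr => j _; rewrite !mxE.
Qed.

Lemma trmx_dlap_mulmxE x i :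
  ((dlap w)^T *m x) i 0 = \sum_j w i j * (x i 0 - x j 0).
Proof.
rewrite /dlap /adjacency linearB /= trmxK outdegE tr_diag_mx mulmxBl.
rewrite mul_diag_mx !mxE mulr_suml -sumrB.
by apply: eq_bigr => j _; ring.
Qed.

Lemma eulerian_indeg : eulerian w -> forall i, \sum_k w k i = \sum_k w i k.
Proof.
move=> /matrixP/(_ _ 0) eul i; move: (eul i).
rewrite dlap_mulmxE !mxE mulr1 => /subr0_eq ->.
by apply: eq_bigr => j _; rewrite mxE mulr1.
Qed.

Hypothesis w_eul : eulerian w.

Lemma dlap_mulmx_eulerian x i :
  (dlap w *m x) i 0 = \sum_j w j i * (x i 0 - x j 0).
Proof.
rewrite dlap_mulmxE -eulerian_indeg // mulr_suml -sumrB.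
by apply: eq_bigr => j _; ring.
Qed.

Lemma qform_dlap x :
  qform (dlap w) x *+ 2 = \sum_i \sum_j w i j * (x i 0 - x j 0) ^+ 2.
Proof.
rewrite mulr2n -{1}qform_tr !qformE.
under eq_bigr do rewrite trmx_dlap_mulmxE big_distrr.
under [X in _ + X]eq_bigr do rewrite dlap_mulmx_eulerian big_distrr.
rewrite [X in _ + X]exchange_big -big_split; apply: eq_bigr => i _.
by rewrite -big_split; apply: eq_bigr => j _ /=; ring.
Qed.

Hypothesis w_ge0 : forall i j, 0 <= w i j.

Lemma qform_dlap_ge0 x : 0 <= qform (dlap w) x.
Proof.
rewrite -(pmulrn_lge0 _ (ltn0Sn 1)) qform_dlap.
by apply: sumr_ge0 => i _; apply: sumr_ge0 => j _; rewrite mulr_ge0 ?sqr_ge0.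
Qed.

Lemma qform_dlap_eq0 x :
  qform (dlap w) x = 0 -> dlap w *m x = 0 /\ (dlap w)^T *m x = 0.
Proof.
move=> qx0.
have edge0 i j : w i j * (x i 0 - x j 0) = 0.
  have term_ge0 i' j' : 0 <= w i' j' * (x i' 0 - x j' 0) ^+ 2.
    by rewrite mulr_ge0 ?sqr_ge0.
  have sum0 : \sum_i \sum_j w i j * (x i 0 - x j 0) ^+ 2 = 0.
    by rewrite -qform_dlap qx0 mul0rn.
  have row_ge0 i' : 0 <= \sum_j w i' j * (x i' 0 - x j 0) ^+ 2.
    by apply: sumr_ge0 => j' _; apply: term_ge0.
  have row0 := psumr_eq0P (fun i' _ => row_ge0 i') sum0.
  have /eqP := psumr_eq0P (fun j' _ => term_ge0 i j') (@row0 i isT) (i := j) isT.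
  by rewrite mulf_eq0 sqrf_eq0 => /orP[]/eqP->; rewrite ?mul0r ?mulr0.
split; apply/matrixP => i k; rewrite ord1 [RHS]mxE.
  by rewrite dlap_mulmx_eulerian big1 // => j _; rewrite -opprB mulrN edge0 oppr0.
by rewrite trmx_dlap_mulmxE big1.
Qed.

Lemma trmx_dlap_ker x : (dlap w)^T *m x = 0 <-> dlap w *m x = 0.
Proof.
by split=> /qform_ker; rewrite ?qform_tr => /qform_dlap_eq0[].
Qed.

Lemma symm_part_dlap_ker x : symm_part (dlap w) *m x = 0 <-> dlap w *m x = 0.
Proof.
split=> [/qform_ker|Lx0].
  by rewrite qform_symm_part => /qform_dlap_eq0[].
by rewrite -scalemxAl mulmxDl Lx0 (proj2 (trmx_dlap_ker x) Lx0) addr0 scaler0.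
Qed.

End Laplacian.

Section PartialSymmetrization.
Variables (R : rcfType) (n : nat) (w : 'M[R]_n) (beta : R).
Hypotheses (w_ge0 : forall i j, 0 <= w i j) (w_eul : eulerian w).
Hypothesis beta_ge0 : 0 <= beta.
Implicit Types (x : 'cV[R]_n).

Local Notation L0 := (dlap w).
Local Notation L1 := (dlap (partial_symm beta w)).
Local Notation U := (symm_part (dlap (partial_symm beta w))).

Let beta1_neq0 : 1 + beta != 0.
Proof. by rewrite lt0r_neq0 // ltr_pwDl. Qed.

Lemma partial_symm_ge0 i j : 0 <= partial_symm beta w i j.
Proof.
rewrite /partial_symm /undirectify !mxE addr_ge0 // mulr_ge0 //.
by rewrite divr_ge0 ?addr_ge0.
Qed.

Lemma dlap_partial_symm : L1 = beta *: symm_part L0 + L0.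
Proof.
apply/matrixP => i j.
rewrite /dlap /partial_symm /symm_part /outdeg /adjacency /undirectify !mxE.
case: eqVneq => [<-|_]; last by field.
under eq_bigr do rewrite !mxE.
rewrite big_split /= -mulr_sumr -mulr_suml big_split /= eulerian_indeg //.
by field.
Qed.

Lemma eulerian_partial_symm : eulerian (partial_symm beta w).
Proof.
have L0T1 : L0^T *m (const_mx 1 : 'cV[R]_n) = 0.
  apply/matrixP => i k; rewrite ord1 trmx_dlap_mulmxE [RHS]mxE big1 // => j _.
  by rewrite !mxE subrr mulr0.
rewrite /eulerian dlap_partial_symm mulmxDl w_eul addr0 -scalemxAl.
by rewrite -scalemxAl mulmxDl w_eul L0T1 addr0 !scaler0.
Qed.

Let w1_ge0 := partial_symm_ge0.
Let w1_eul := eulerian_partial_symm.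

Lemma symm_part_dlap_partial_symm : U = (1 + beta) *: symm_part L0.
Proof.
rewrite dlap_partial_symm; apply/matrixP => i j.
by rewrite /symm_part !mxE; field.
Qed.

Lemma symm_part_partial_symm_ker x : U *m x = 0 <-> L0 *m x = 0.
Proof.
rewrite -symm_part_dlap_ker // symm_part_dlap_partial_symm -scalemxAl.
split=> [/eqP|->]; last by rewrite scaler0.
by rewrite scaler_eq0 (negbTE beta1_neq0) => /eqP.
Qed.

Lemma dlap_partial_symm_ker x : L1 *m x = 0 <-> L0 *m x = 0.
Proof.
by rewrite -symm_part_partial_symm_ker (symm_part_dlap_ker w1_eul w1_ge0).
Qed.

Lemma trmx_dlap_partial_symm_ker x : L1^T *m x = 0 <-> L0 *m x = 0.
Proof.
by rewrite -dlap_partial_symm_ker (trmx_dlap_ker w1_eul w1_ge0).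
Qed.

Lemma dlap_eq_sub_symm_part : L0 = L1 - (beta / (1 + beta)) *: U.
Proof.
rewrite symm_part_dlap_partial_symm scalerA divfK //.
by rewrite dlap_partial_symm addrAC subrr add0r.
Qed.

Section PartialSymmPinv.
Variable Z : 'M[R]_n.
Hypothesis pinvZ : is_mp_pinv Z L1.

Lemma orth_proj_im_dlap_eq P : is_orth_proj_im P L0 -> P = Z *m L1.
Proof.
move=> projP; case: (projP) => PT [PP _]; case: pinvZ => _ [_ [_ ZL1T]].
apply: orth_proj_eq => // [|x]; first exact: mp_pinv_proj_idem.
rewrite (orth_proj_im_ker _ projP) trmx_dlap_ker // (mp_pinv_proj_ker pinvZ).
by rewrite dlap_partial_symm_ker.
Qed.

Lemma opnorm_proj_sub_pinv P :
  is_orth_proj_im P L0 -> opnorm_le U (P - Z *m L0) (beta / (1 + beta)).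
Proof.
have c_ge0 : 0 <= beta / (1 + beta) by rewrite divr_ge0 ?addr_ge0.
move=> /orth_proj_im_dlap_eq -> x.
rewrite [in Z *m L0]dlap_eq_sub_symm_part (mulmxBr Z L1) opprB addrC subrK.
rewrite -scalemxAr -scalemxAl hnormZ ger0_norm // ler_wpM2l //.
apply: (hnorm_pinv_symm_part_le pinvZ) => y.
  by rewrite qform_symm_part (qform_dlap_ge0 w1_eul w1_ge0).
by rewrite trmx_dlap_partial_symm_ker symm_part_partial_symm_ker.
Qed.

End PartialSymmPinv.

End PartialSymmetrization.

Theorem lemma4p6 (R : rcfType) (n : nat) (w0 : 'M[R]_n)
  (hw : forall i j, 0 <= w0 i j) (heul : eulerian w0)
  (beta : R) (hbeta : 0 < beta) (L1pinv : 'M[R]_n) :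
  is_mp_pinv L1pinv (dlap (partial_symm beta w0)) ->
  approx_pinv (1 - 1 / (1 + beta)) L1pinv (dlap w0)
    (symm_part (dlap (partial_symm beta w0))).
Proof.
move=> pinvZ; have beta_ge0 := ltW hbeta.
have -> : 1 - 1 / (1 + beta) = beta / (1 + beta).
  by field; rewrite lt0r_neq0 // ltr_pwDl.
rewrite /approx_pinv /in_ker.
split; first by move=> x; rewrite (symm_part_partial_symm_ker hw heul beta_ge0).
split; first by move=> x; rewrite (trmx_dlap_ker heul hw).
split; first by move=> x; rewrite (mp_pinv_ker pinvZ) trmx_dlap_partial_symm_ker.
split; first by move=> x; rewrite (mp_pinv_trmx_ker pinvZ) dlap_partial_symm_ker.
exact: opnorm_proj_sub_pinv.
Qed.
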